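(* Let $0<q<1$, let $m,n$ be positive integers, let $s_1,\dots,s_m>0$ be real and let $b_1,\dots,b_m$ be complex numbers with $|b_k|>1$ for all $k$. Put $s=s_1+\cdots+s_m$. Then \[ n^m\,\lambda_{q^n}\begin{bmatrix}s_1,\dots,s_m\\ b_1^n,\dots,b_m^n\end{bmatrix} = [n]_q^{\,s}\sum_{\varepsilon_1^n=\cdots=\varepsilon_m^n=1} \lambda_q\begin{bmatrix}s_1,\dots,s_m\\ \varepsilon_1b_1,\dots,\varepsilon_mb_m\end{bmatrix}, \] where the sum is over all $n^m$ tuples $(\varepsilon_1,\dots,\varepsilon_m)$ of complex $n$-th roots of unity.
   Context: For $0<p<1$ and real $x$ let $[x]_p := (1-p^x)/(1-p)$. For real $s_1,\dots,s_m>0$ and complex $b_1,\dots,b_m$ with $|b_k|>1$, the multiple $p$-polylogarithm is \[ \lambda_p\begin{bmatrix}s_1,\dots,s_m\\ b_1,\dots,b_m\end{bmatrix} := \sum_{\nu_1,\dots,\nu_m\ge1}\prod_{k=1}^m b_k^{-\nu_k}\Big[\sum_{j=k}^m\nu_j\Big]_p^{-s_k}, \] the sum being over positive integers $\nu_1,\dots,\nu_m$. In the claim it is used with $p=q$ and with $p=q^n$. *)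

From HB Require Import structures.
From mathcomp Require Import all_boot all_order all_algebra.
From mathcomp Require Import all_classical all_reals all_analysis.
From mathcomp Require Import complex.
Set Implicit Arguments. Unset Strict Implicit. Unset Printing Implicit Defensive.
Import Order.TTheory GRing.Theory Num.Theory.
Import numFieldNormedType.Exports.
Local Open Scope ring_scope.
Local Open Scope complex_scope.

Definition qbracket {R : realType} (p x : R) : R := (1 - p `^ x) / (1 - p).

Definition lam_term {R : realType} (m : nat) (p : R) (s : 'I_m -> R)
    (b : 'I_m -> R[i]) (nu : 'I_m -> nat) : R[i] :=
  \prod_(k < m)
     ((b k) ^- (nu k) *
      ((qbracket p (\sum_(j < m | (k <= j)%N) nu j)%:R) `^ (- s k))%:C).

Definition lam_box {R : realType} (m : nat) (p : R) (s : 'I_m -> R)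
    (b : 'I_m -> R[i]) (N : nat) : R[i] :=
  \sum_(nu : {ffun 'I_m -> 'I_N}) lam_term p s b (fun k => (nu k).+1).

(* The multiple p-polylogarithm lambda_p[s; b] (an absolutely convergent
   multiple series), defined as the limit of its box partial sums, taken
   componentwise (real and imaginary parts). *)
Definition mpolylog {R : realType} (m : nat) (p : R) (s : 'I_m -> R)
    (b : 'I_m -> R[i]) : R[i] :=
  (limn (fun N => complex.Re (lam_box p s b N)))
    +i* (limn (fun N => complex.Im (lam_box p s b N))).

(* Summing the twisted summands over all n-th roots of unity eps_k, the
   character sum sum_eps eps^(-nu) equals n if n divides nu and 0 otherwise, so
   only the multi-indices nu = n mu survive, each with weight n^m.  For these,
   [n T]_q = [n]_q [T]_(q^n) turns the surviving terms into the summands of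
   lambda_(q^n)[s; b^n] divided by [n]_q^s.  This identity holds exactly between
   box partial sums of sides n N and N; as the box sums converge (each summand
   is dominated by a product of geometric terms), letting N grow gives the
   theorem. *)

From HB Require Import structures.
From mathcomp Require Import all_boot all_order all_algebra.
From mathcomp Require Import all_classical all_reals all_analysis.
From mathcomp Require Import complex.
From mathcomp Require Import cyclic separable cyclotomic.
From mathcomp Require Import lra zify.
Import Order.TTheory GRing.Theory Num.Theory.
Import numFieldNormedType.Exports.
Local Open Scope ring_scope.
Local Open Scope complex_scope.

Section RootsOfUnity.
Context {C : numClosedFieldType} {n : nat} {rs : seq C}.
Hypotheses (n_gt0 : (0 < n)%N) (rs_uniq : uniq rs)
  (mem_rs : forall z, (z \in rs) = (z ^+ n == 1)).

Let rs_unity : all n.-unity_root rs.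
Proof. by apply/allP => z; rewrite unity_rootE -mem_rs. Qed.

Lemma size_unity_roots : size rs = n.
Proof.
apply/eqP; rewrite eqn_leq max_unity_roots //=.
have [r Dp] := closed_field_poly_normal ('X^n - 1 : {poly C}).
rewrite (monicP _) ?monicXnsubC // scale1r in Dp.
have r_uniq : uniq r.
  by rewrite -separable_prod_XsubC -Dp separable_Xn_sub_1 // pnatr_eq0 -lt0n.
have r_sub : {subset r <= rs}.
  by move=> z; rewrite mem_rs -unity_rootE -root_prod_XsubC -Dp.
have := size_XnsubC (1 : C) n_gt0; rewrite Dp size_prod_XsubC => -[<-].
exact: uniq_leq_size.
Qed.

Lemma sum_unity_roots_expVn v :
  \sum_(z <- rs) z ^- v = if (n %| v)%N then n%:R else 0.
Proof.
have [w rs_w w_prim] := hasP (has_prim_root n_gt0 rs_unity rs_uniq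
  (eq_leq (esym size_unity_roots))).
case: ifPn => [n_dvd_v | n_ndvd_v].
  rewrite (eq_big_seq (fun=> 1)) ?big_const_seq ?count_predT //.
    by rewrite size_unity_roots iter_addr_0.
  move=> z; rewrite mem_rs => /eqP zn1.
  by case/dvdnP: n_dvd_v => k ->; rewrite mulnC exprM zn1 expr1n invr1.
have w_neq0 : w != 0.
  by move: (oner_neq0 C); rewrite -(prim_expr_order w_prim) expf_eq0 n_gt0.
(* Multiplying by [w] permutes [rs], so the sum is fixed by the factor
   [w ^- v]. *)
have rs_rot : perm_eq rs [seq w * z | z <- rs].
  apply: uniq_perm; rewrite ?map_inj_uniq //; first exact: mulfI.
  move=> z; rewrite mem_rs; apply/idP/mapP => [/eqP zn1 | [y]].
    exists (w^-1 * z); last by rewrite mulVKf.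
    by rewrite mem_rs exprMn exprVn zn1 (prim_expr_order w_prim) invr1 mulr1.
  rewrite mem_rs => /eqP yn1 ->.
  by rewrite exprMn yn1 (prim_expr_order w_prim) mulr1.
have wv_neq1 : w ^- v != 1.
  by rewrite invr_eq1 -(prim_order_dvd w_prim).
apply/eqP; have : (1 - w ^- v) * \sum_(z <- rs) z ^- v == 0.
  rewrite mulrBl mul1r subr_eq0 {1}(perm_big _ rs_rot) big_map mulr_sumr.
  by apply/eqP/eq_bigr => z _; rewrite exprMn invfM.
by rewrite mulf_eq0 subr_eq0 eq_sym (negbTE wv_neq1).
Qed.

End RootsOfUnity.

Section BoxSums.
Variable m : nat.

Definition box_sum {V : nmodType} (F : ('I_m -> nat) -> V) (N : nat) : V :=
  \sum_(nu : {ffun 'I_m -> 'I_N}) F (fun k => (nu k).+1).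

Lemma box_sum_widen {V : nmodType} (F : ('I_m -> nat) -> V) N M :
  (0 < m)%N -> (N <= M)%N ->
  box_sum F N =
  \sum_(nu : {ffun 'I_m -> 'I_M} | [forall k, nu k < N]%N)
     F (fun k => (nu k).+1).
Proof.
move=> m_gt0; case: N => [|N] NM.
  rewrite /box_sum big1 => [|nu]; last by case: (nu (Ordinal m_gt0)).
  by rewrite big1 // => nu /forallP /(_ (Ordinal m_gt0)).
pose widen (nu : {ffun 'I_m -> 'I_N.+1}) := [ffun k => widen_ord NM (nu k)].
pose narrow (nu : {ffun 'I_m -> 'I_M}) : {ffun 'I_m -> 'I_N.+1} :=
  [ffun k => inord (nu k)].
rewrite [RHS](reindex_onto widen narrow) => [|nu /forallP nu_lt].
  apply: eq_big => [nu | nu _]; last first.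
    by congr F; apply: funext => k; rewrite ffunE.
  apply/esym/andP; split; first by apply/forallP => k; rewrite ffunE /=.
  by apply/eqP/ffunP => k; rewrite !ffunE; apply: val_inj; rewrite /= inordK.
by apply/ffunP => k; rewrite !ffunE; apply: val_inj; rewrite /= inordK.
Qed.

Lemma norm_box_sumB_le (C : numDomainType) (F G : ('I_m -> nat) -> C) N M :
  (0 < m)%N -> (N <= M)%N ->
  (forall nu, (forall k, 0 < nu k)%N -> `|F nu| <= G nu) ->
  `|box_sum F M - box_sum F N| <= box_sum G M - box_sum G N.
Proof.
move=> m_gt0 NM FG.
have box_sumB (H : ('I_m -> nat) -> C) : box_sum H M - box_sum H N =
    \sum_(nu : {ffun 'I_m -> 'I_M} | ~~ [forall k, nu k < N]%N)
      H (fun k => (nu k).+1).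
  rewrite (box_sum_widen H _ _ m_gt0 NM) /box_sum.
  rewrite (bigID (fun nu : {ffun 'I_m -> 'I_M} => [forall k, nu k < N]%N)).
  by rewrite addrC addKr.
rewrite !box_sumB; apply: le_trans (ler_norm_sum _ _ _) _.
by apply: ler_sum => nu _; apply: FG.
Qed.

Lemma box_sum_prod_exprn (R : comPzSemiRingType) (rho : 'I_m -> R) N :
  box_sum (fun nu => \prod_k rho k ^+ nu k) N
  = \prod_k \sum_(i < N) rho k ^+ i.+1.
Proof.
by rewrite /box_sum -(bigA_distr_bigA (fun k (i : 'I_N) => rho k ^+ i.+1)).
Qed.

Lemma mul_succ_pred_lt {n N i : nat} :
  (0 < n)%N -> (i < N)%N -> ((n * i.+1).-1 < n * N)%N.
Proof. by move=> *; nia. Qed.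

Lemma divn_succ_pred_lt {n N j : nat} :
  (0 < n)%N -> (j < n * N)%N -> ((j.+1 %/ n).-1 < N)%N.
Proof. by move=> *; nia. Qed.

Lemma box_sum_dvd (V : comPzSemiRingType) n N (F : ('I_m -> nat) -> V) :
  (0 < n)%N ->
  box_sum (fun nu => (\prod_k (if (n %| nu k)%N then n%:R else 0)) * F nu)
          (n * N)
  = (n ^ m)%:R * box_sum (fun nu => F (fun k => n * nu k)%N) N.
Proof.
move=> n_gt0; rewrite /box_sum mulr_sumr.
rewrite (bigID (fun nu : {ffun 'I_m -> 'I_(n * N)} =>
                 [forall k, n %| (nu k).+1]%N)) /=.
rewrite [X in _ + X]big1 ?addr0 => [|nu /forallPn[k /negbTE n_ndvd]];
  last by rewrite (bigD1 k) //= n_ndvd !mul0r.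
pose up (mu : {ffun 'I_m -> 'I_N}) : {ffun 'I_m -> 'I_(n * N)} :=
  [ffun k => Ordinal (mul_succ_pred_lt n_gt0 (ltn_ord (mu k)))].
pose down (nu : {ffun 'I_m -> 'I_(n * N)}) : {ffun 'I_m -> 'I_N} :=
  [ffun k => Ordinal (divn_succ_pred_lt n_gt0 (ltn_ord (nu k)))].
have upK mu k : (up mu k).+1 = (n * (mu k).+1)%N.
  by rewrite ffunE /= prednK // muln_gt0 n_gt0.
rewrite (reindex_onto up down) => [|nu /forallP dvd_nu]; last first.
  apply/ffunP => k; rewrite !ffunE; apply: val_inj => /=.
  have /dvdnP[x nuE] := dvd_nu k; have x_gt0 : (0 < x)%N by case: x nuE.
  by rewrite nuE mulnK // prednK // mulnC -nuE.
apply: eq_big => [mu | mu _].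
  apply/andP; split; first by apply/forallP => k; rewrite upK dvdn_mulr.
  apply/eqP/ffunP => k; rewrite !ffunE; apply: val_inj => /=.
  by rewrite prednK ?muln_gt0 ?n_gt0 // mulKn.
rewrite (eq_bigr (fun=> n%:R)) => [|k _]; last by rewrite upK dvdn_mulr.
rewrite prodr_const card_ord natrX; congr (_ * F _).
by apply: funext => k; rewrite upK.
Qed.

End BoxSums.

Arguments box_sum {m V} F N.

Lemma cvgn_of_dominated_increments (R : realType) (u g : R ^nat) (B : R) :
  (forall N M, (N <= M)%N -> `|u M - u N| <= g M - g N) ->
  (forall N, g N <= B) -> cvgn u.
Proof.
move=> incr g_le.
have g_nd : {homo g : N M / (N <= M)%N >-> N <= M}.
  by move=> N M NM; rewrite -subr_ge0 (le_trans _ (incr N M NM)).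
have ug_nd : {homo u + g : N M / (N <= M)%N >-> N <= M}.
  move=> N M NM /=; have := incr N M NM; rewrite ler_norml => /andP[? _].
  rewrite !fctE; lra.
have g_cvg : cvgn g.
  by apply: nondecreasing_is_cvgn => //; exists B => _ [N _ <-].
have ug_cvg : cvgn (u + g).
  apply: nondecreasing_is_cvgn => //; exists (u 0%N - g 0%N + 2 * B).
  move=> _ [N _ <-] /=; have := incr 0%N N (leq0n N).
  rewrite ler_norml => /andP[_ uN]; have := g_le N.
  rewrite fctE; lra.
by rewrite -[u](addrK g); apply: is_cvgB.
Qed.

Lemma cvg_sum_seq (K : numFieldType) (T I : Type) (F : set_system T)
    (r : seq I) (f : I -> T -> K) (l : I -> K) : Filter F ->
  (forall i, f i x @[x --> F] --> l i)%classic ->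
  ((\sum_(i <- r) f i x) @[x --> F] --> \sum_(i <- r) l i)%classic.
Proof.
move=> F_filter f_cvg; elim: r => [|i r IHr].
  by under eq_fun do rewrite big_nil; rewrite big_nil; exact: cvg_cst.
by under eq_fun do rewrite big_cons; rewrite big_cons; exact: cvgD.
Qed.

Section QBracket.
Context {R : realType}.
Implicit Types (p q : R) (T n : nat).

Lemma qbracket_nat p T : 0 <= p -> qbracket p T%:R = (1 - p ^+ T) / (1 - p).
Proof. by move=> p_ge0; rewrite /qbracket powR_mulrn. Qed.

Lemma qbracket_ge1 p T : 0 <= p -> p < 1 -> (0 < T)%N -> 1 <= qbracket p T%:R.
Proof.
move=> p_ge0 p_lt1; case: T => // T _.
rewrite qbracket_nat // ler_pdivlMr ?subr_gt0 // mul1r lerD2l lerN2 exprS.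
by rewrite ler_piMr // exprn_ile1 // ltW.
Qed.

Lemma qbracket_natM q n T : 0 <= q -> q < 1 -> (0 < n)%N ->
  qbracket q (n * T)%:R = qbracket q n%:R * qbracket (q ^+ n) T%:R.
Proof.
move=> q_ge0 q_lt1 n_gt0.
rewrite !qbracket_nat ?exprn_ge0 // exprM [RHS]mulrC mulrA divfK //.
by rewrite subr_eq0 eq_sym lt_eqF // exprn_ilt1 // -lt0n.
Qed.

Lemma qbracket_ge0 p T : 0 <= p -> p < 1 -> 0 <= qbracket p T%:R.
Proof.
move=> p_ge0 p_lt1; have p_le1 := ltW p_lt1.
by rewrite qbracket_nat // divr_ge0 // subr_ge0 // exprn_ile1.
Qed.

End QBracket.

Lemma powRN_le1 {R : realType} (x s : R) : 1 <= x -> 0 <= s -> x `^ (- s) <= 1.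
Proof.
move=> x_ge1 s_ge0; have x_gt0 : 0 < x by apply: lt_le_trans x_ge1.
have : 1 `^ s <= x `^ s.
  by apply: ge0_ler_powR; rewrite ?nnegrE // ltW.
by rewrite powR1 powRN invf_le1 ?powR_gt0.
Qed.

Lemma powR_sum {R : realType} (I : Type) (r : seq I) (x : R) (f : I -> R) :
  0 < x -> x `^ (\sum_(i <- r) f i) = \prod_(i <- r) x `^ f i.
Proof.
move=> x_gt0; apply: (big_morph (powR x)) => [a a' |]; last exact: powRr0.
by rewrite powRD // (gt_eqF x_gt0) implybT.
Qed.

Lemma Re_scale {R : rcfType} (a : R) (z : R[i]) :
  complex.Re (a%:C * z) = a * complex.Re z.
Proof. by case: z => x y /=; rewrite mul0r subr0. Qed.

Lemma Im_scale {R : rcfType} (a : R) (z : R[i]) :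
  complex.Im (a%:C * z) = a * complex.Im z.
Proof. by case: z => x y /=; rewrite mul0r addr0. Qed.

Lemma norm_Im_le {R : rcfType} (z : R[i]) : `|complex.Im z|%:C <= `|z|.
Proof.
rewrite normc_def lecR -sqrtr_sqr ler_sqrt ?lerDr ?sqr_ge0 //.
by rewrite addr_ge0 ?sqr_ge0.
Qed.

Lemma norm_lam_term_le {R : realType} {m : nat} (p : R) (s : 'I_m -> R)
    (c : 'I_m -> R[i]) (rho : 'I_m -> R) (nu : 'I_m -> nat) :
  0 <= p -> p < 1 -> (forall k, 0 <= s k) ->
  (forall k, `|c k|^-1 = (rho k)%:C) -> (forall k, 0 < nu k)%N ->
  `|lam_term p s c nu| <= (\prod_k rho k ^+ nu k)%:C.
Proof.
move=> p_ge0 p_lt1 s_ge0 rhoE nu_gt0.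
rewrite /lam_term normr_prod rmorph_prod; apply: ler_prod => k _.
rewrite normr_ge0 normrM normfV normrX -exprVn rhoE -rmorphXn.
set x := qbracket _ _ `^ _; have x_ge0 : 0 <= x by apply: powR_ge0.
have x_le1 : x <= 1.
  rewrite powRN_le1 // qbracket_ge1 //.
  by rewrite (bigD1 k) //= addn_gt0 nu_gt0.
rewrite ger0_norm ?ler0c // -rmorphM lecR ler_piMr //.
by rewrite exprn_ge0 // -lecR -rhoE invr_ge0.
Qed.

(* [phi] will be [Re] or [Im]: [mpolylog] is defined through the limits of the
   real and imaginary parts of the box sums. *)
Lemma cvgn_lam_box {R : realType} {m : nat} (p : R) (s : 'I_m -> R)
    (c : 'I_m -> R[i]) (phi : {additive R[i] -> R}) :
  (forall z, `|phi z|%:C <= `|z|) -> (0 < m)%N -> 0 <= p -> p < 1 ->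
  (forall k, 0 <= s k) -> (forall k, 1 < `|c k|) ->
  cvgn (fun N => phi (lam_box p s c N)).
Proof.
move=> phi_le m_gt0 p_ge0 p_lt1 s_ge0 c_gt1.
pose rho k := complex.Re `|c k|^-1.
have rhoE k : `|c k|^-1 = (rho k)%:C by rewrite RRe_real // rpredV normr_real.
have rho_gt0 k : 0 < rho k.
  by rewrite -ltcR -rhoE invr_gt0 (lt_trans ltr01).
have rho_lt1 k : rho k < 1 by rewrite -ltcR -rhoE invf_lt1 // (lt_trans ltr01).
pose g := box_sum (fun nu => \prod_k rho k ^+ nu k).
apply: (@cvgn_of_dominated_increments _ _ g (\prod_k (rho k / (1 - rho k)))).
  move=> N M NM; rewrite -lecR -raddfB; apply: le_trans (phi_le _) _.
  rewrite rmorphB !rmorph_sum.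
  apply: (@norm_box_sumB_le m R[i] (lam_term p s c)
           (fun nu => (\prod_k rho k ^+ nu k)%:C)) => // nu nu_gt0.
  exact: norm_lam_term_le.
move=> N; rewrite /g box_sum_prod_exprn; apply: ler_prod => k _.
rewrite sumr_ge0 => [|i _]; last exact/exprn_ge0/ltW.
have := geometric_le_lim N (ltW (rho_gt0 k)) (rho_gt0 k).
rewrite gtr0_norm // => /(_ (rho_lt1 k)).
rewrite /series /geometric /= big_mkord; apply: le_trans.
by under eq_bigr do rewrite exprS.
Qed.

Lemma sum_lam_term_twist {R : realType} {m : nat} (p : R) (s : 'I_m -> R)
    (b : 'I_m -> R[i]) (rs : seq R[i]) (nu : 'I_m -> nat) :
  \sum_(e : {ffun 'I_m -> 'I_(size rs)})
     lam_term p s (fun k => rs`_(e k) * b k) nu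
  = (\prod_k \sum_(z <- rs) z ^- nu k) * lam_term p s b nu.
Proof.
pose Y k := b k ^- nu k *
  (qbracket p (\sum_(j < m | (k <= j)%N) nu j)%:R `^ (- s k))%:C.
transitivity (\sum_(e : {ffun 'I_m -> 'I_(size rs)})
                \prod_k (rs`_(e k) ^- nu k * Y k)).
  by apply: eq_bigr => e _; apply: eq_bigr => k _; rewrite exprMn invfM mulrA.
rewrite -(bigA_distr_bigA (fun k (i : 'I_(size rs)) => rs`_i ^- nu k * Y k)).
rewrite /lam_term -big_split; apply: eq_bigr => k _.
by rewrite -mulr_suml (big_nth 0) big_mkord.
Qed.

Lemma lam_term_scale {R : realType} {m : nat} (q : R) n (s : 'I_m -> R)
    (b : 'I_m -> R[i]) (nu : 'I_m -> nat) :
  0 <= q -> q < 1 -> (0 < n)%N ->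
  lam_term q s b (fun k => n * nu k)%N * (qbracket q n%:R `^ (\sum_k s k))%:C
  = lam_term (q ^+ n) s (fun k => b k ^+ n) nu.
Proof.
move=> q_ge0 q_lt1 n_gt0.
have qn_gt0 : 0 < qbracket q n%:R.
  by apply: lt_le_trans (qbracket_ge1 _ _ _ _ _).
rewrite powR_sum // rmorph_prod /lam_term -big_split /=; apply: eq_bigr => k _.
rewrite -exprM -mulrA -rmorphM -big_distrr /= qbracket_natM //.
rewrite powRM ?(ltW qn_gt0) ?qbracket_ge0 ?exprn_ge0 ?exprn_ilt1 -?lt0n //.
by rewrite mulrAC powRN mulVf ?mul1r // powR_eq0 negb_and (gt_eqF qn_gt0).
Qed.

Lemma lam_box_twist_unity_roots {R : realType} {m : nat} (q : R) n
    (s : 'I_m -> R) (b : 'I_m -> R[i]) (rs : seq R[i]) N :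
  0 <= q -> q < 1 -> (0 < n)%N -> uniq rs ->
  (forall z, (z \in rs) = (z ^+ n == 1)) ->
  (n ^ m)%:R * lam_box (q ^+ n) s (fun k => b k ^+ n) N
  = (qbracket q n%:R `^ (\sum_k s k))%:C *
    \sum_(e : {ffun 'I_m -> 'I_(size rs)})
       lam_box q s (fun k => rs`_(e k) * b k) (n * N).
Proof.
move=> q_ge0 q_lt1 n_gt0 rs_uniq mem_rs.
have -> : \sum_(e : {ffun 'I_m -> 'I_(size rs)})
            lam_box q s (fun k => rs`_(e k) * b k) (n * N)
  = box_sum (fun nu => (\prod_k (if (n %| nu k)%N then n%:R else 0)) *
                       lam_term q s b nu) (n * N).
  rewrite /lam_box /box_sum exchange_big; apply: eq_bigr => nu _ /=.
  by rewrite sum_lam_term_twist (eq_bigr _ (fun k _ =>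
    sum_unity_roots_expVn n_gt0 rs_uniq mem_rs _)).
rewrite box_sum_dvd // mulrCA; congr (_ * _).
rewrite /box_sum mulr_sumr; apply: eq_bigr => mu _.
by rewrite mulrC lam_term_scale.
Qed.

Lemma lim_lam_box_twist {R : realType} {m : nat} (q : R) n (s : 'I_m -> R)
    (b : 'I_m -> R[i]) (rs : seq R[i]) (phi : {additive R[i] -> R}) :
  (forall z, `|phi z|%:C <= `|z|) ->
  (forall (a : R) z, phi (a%:C * z) = a * phi z) ->
  0 < q -> q < 1 -> (0 < m)%N -> (0 < n)%N ->
  (forall k, 0 <= s k) -> (forall k, 1 < `|b k|) ->
  uniq rs -> (forall z, (z \in rs) = (z ^+ n == 1)) ->
  (n ^ m)%:R * limn (fun N => phi (lam_box (q ^+ n) s (fun k => b k ^+ n) N))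
  = qbracket q n%:R `^ (\sum_k s k) *
    \sum_(e : {ffun 'I_m -> 'I_(size rs)})
       limn (fun N => phi (lam_box q s (fun k => rs`_(e k) * b k) N)).
Proof.
move=> phi_le phiZ q_gt0 q_lt1 m_gt0 n_gt0 s_ge0 b_gt1 rs_uniq mem_rs.
have q_ge0 := ltW q_gt0.
have twist_gt1 (e : {ffun 'I_m -> 'I_(size rs)}) k : 1 < `|rs`_(e k) * b k|.
  have /eqP root1 : rs`_(e k) ^+ n == 1 by rewrite -mem_rs mem_nth.
  have /eqP := congr1 Num.norm root1; rewrite normrX normr1 pexpr_eq1 //.
  by move=> /eqP norm1; rewrite normrM norm1 mul1r.
have bn_gt1 k : 1 < `|b k ^+ n| by rewrite normrX exprn_egt1 // -lt0n.
have qn_ge0 : 0 <= q ^+ n := exprn_ge0 n q_ge0.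
have qn_lt1 : q ^+ n < 1 by rewrite exprn_ilt1 // -lt0n.
transitivity (limn (fun N =>
  (n ^ m)%:R * phi (lam_box (q ^+ n) s (fun k => b k ^+ n) N))).
  by apply/esym/cvg_lim => //; apply: cvgMr; apply: cvgn_lam_box.
have twistN N :=
  lam_box_twist_unity_roots _ _ s b _ N q_ge0 q_lt1 n_gt0 rs_uniq mem_rs.
under eq_fun do rewrite mulr_natl -raddfMn -mulr_natl twistN phiZ raddf_sum.
apply: cvg_lim => //; apply: cvgMr; apply: cvg_sum_seq => e.
have e_cvg := cvgn_lam_box _ _ _ _ phi_le m_gt0 q_ge0 q_lt1 s_ge0 (twist_gt1 e).
exact: cvg_comp _ _ (cvg_mulnl _ n_gt0) e_cvg.
Qed.

Theorem theorem6p1 (R : realType) (q : R) (m n : nat)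
    (s : 'I_m -> R) (b : 'I_m -> R[i]) (rs : seq R[i]) :
  0 < q -> q < 1 -> (0 < m)%N -> (0 < n)%N ->
  (forall k, 0 < s k) -> (forall k, 1 < `|b k|) ->
  uniq rs -> (forall z : R[i], (z \in rs) = (z ^+ n == 1)) ->
  (n ^ m)%:R * mpolylog (q ^+ n) s (fun k => b k ^+ n)
  = ((qbracket q n%:R) `^ (\sum_(k < m) s k))%:C *
    \sum_(e : {ffun 'I_m -> 'I_(size rs)})
       mpolylog q s (fun k => nth 0 rs (e k) * b k).
Proof.
move=> q_gt0 q_lt1 m_gt0 n_gt0 s_gt0 b_gt1 rs_uniq mem_rs.
have s_ge0 k : 0 <= s k := ltW (s_gt0 k).
have natC : ((n ^ m)%:R : R[i]) = ((n ^ m)%:R : R)%:C by rewrite rmorph_nat.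
apply/eqP; rewrite natC eq_complex !Re_scale !Im_scale !raddf_sum /=.
rewrite (lim_lam_box_twist _ _ _ _ rs (@complex.Re R : {additive _ -> _})) //.
rewrite (lim_lam_box_twist _ _ _ _ rs (@complex.Im R : {additive _ -> _})) //.
- by rewrite !eqxx.
- exact: norm_Im_le.
- exact: Im_scale.
- exact: normc_ge_Re.
- exact: Re_scale.
Qed.
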